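(* Let $\gamma > 1$ and let $I$ be a $\gamma$-stable instance of the Euclidean Steiner tree problem with optimal Steiner tree $\mathrm{OPT}$. If $a_1, a_2$ are distinct terminals and $b$ is a Steiner point such that $a_1 b$ and $a_2 b$ are both edges of $\mathrm{OPT}$, then the angle $\angle a_1 b a_2$ is greater than $2\sin^{-1}(\gamma/2)$.
   Context: An instance of the Euclidean Steiner tree problem consists of a finite set $V \subset \mathbb{R}^d$, a set $T \subseteq V$ of terminals, and the complete graph on $V$ with edge weights $w_{uv} = \|u - v\|$. Points of $V \setminus T$ are Steiner points. A Steiner tree is a tree in this complete graph whose vertex set contains all of $T$; its weight is the sum of its edge weights. For $\gamma > 1$, the instance is $\gamma$-stable if it has a minimum-weight Steiner tree $\mathrm{OPT}$ such that for every $w' : V \times V \to \mathbb{R}_{\ge 0}$ with $w_{uv} \le w'_{uv} \le \gamma w_{uv}$ for all $u,v$, every minimum-weight Steiner tree with respect to $w'$ equals $\mathrm{OPT}$ (the $w'$ need not be Euclidean). $\angle a_1 b a_2 \in [0,\pi]$ is the angle at $b$ between the vectors $a_1 - b$ and $a_2 - b$. *)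

From HB Require Import structures.
From mathcomp Require Import all_boot all_order all_algebra.
From mathcomp Require Import all_classical all_reals all_analysis.
Set Implicit Arguments. Unset Strict Implicit. Unset Printing Implicit Defensive.
Import Order.TTheory GRing.Theory Num.Theory.
Local Open Scope ring_scope.

Section SteinerDefs.
Variables (R : realType) (d : nat) (T : finType).

Definition dotv (x y : 'rV[R]_d) : R := \sum_(i < d) x ord0 i * y ord0 i.
Definition enorm (x : 'rV[R]_d) : R := Num.sqrt (dotv x x).

Definition angle (a1 b a2 : 'rV[R]_d) : R :=
  acos (dotv (a1 - b) (a2 - b) / (enorm (a1 - b) * enorm (a2 - b))).

(* A tree in the complete graph on T: vertex set U, edge set E stored as a
   symmetric set of ordered pairs (each undirected edge {u,v} appears as
   (u,v) and (v,u)); connected on U with |E_undirected| = |U| - 1. *)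
Definition is_tree (U : {set T}) (E : {set T * T}) : Prop :=
  [/\ U != finset.set0,
      forall x y, (x, y) \in E -> [&& x \in U, y \in U & x != y],
      forall x y, (x, y) \in E -> (y, x) \in E,
      {in U &, forall x y, connect (fun a b => (a, b) \in E) x y}
    & #|E| = (#|U| - 1).*2]%N.

Definition steiner_tree (Term : {set T}) (U : {set T}) (E : {set T * T}) : Prop :=
  is_tree U E /\ Term \subset U.

(* weight of a tree: sum over undirected edges = half the sum over ordered pairs *)
Definition tree_weight (w : T -> T -> R) (E : {set T * T}) : R :=
  (\sum_(p in E) w p.1 p.2) / 2.

Definition min_steiner (Term : {set T}) (w : T -> T -> R)
    (U : {set T}) (E : {set T * T}) : Prop :=
  steiner_tree Term U E /\
  forall U' E', steiner_tree Term U' E' -> tree_weight w E <= tree_weight w E'.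

Definition eweight (pos : T -> 'rV[R]_d) (u v : T) : R := enorm (pos u - pos v).

Definition stable_with (pos : T -> 'rV[R]_d) (Term : {set T}) (gamma : R)
    (U : {set T}) (E : {set T * T}) : Prop :=
  min_steiner Term (eweight pos) U E /\
  forall w' : T -> T -> R,
    (forall u v, w' u v = w' v u) ->
    (forall u v, eweight pos u v <= w' u v <= gamma * eweight pos u v) ->
    forall U' E', min_steiner Term w' U' E' -> U' = U /\ E' = E.

Definition stable (pos : T -> 'rV[R]_d) (Term : {set T}) (gamma : R) : Prop :=
  exists U E, stable_with pos Term gamma U E.

End SteinerDefs.

From HB Require Import structures.
From mathcomp Require Import all_boot all_order all_algebra.
From mathcomp Require Import all_classical all_reals all_analysis.
From mathcomp Require Import ring lra zify.
Set Implicit Arguments. Unset Strict Implicit. Unset Printing Implicit Defensive.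
Import Order.TTheory GRing.Theory Num.Theory.
Local Open Scope ring_scope.

(* Replacing the edge a2 b of OPT by a1 a2 yields another Steiner tree on the
   same vertices.  Multiply by gamma the weights of the edges of OPT only:
   by stability OPT is still the unique optimum for these weights, so the
   exchanged tree, of weight w'(OPT) - gamma |a2 b| + |a1 a2|, is strictly
   heavier, i.e. |a1 a2| > gamma |a2 b|; symmetrically |a1 a2| > gamma |a1 b|.
   In a triangle whose side opposite b exceeds gamma times both other sides,
   the law of cosines gives cos b < 1 - gamma^2/2 = cos (2 asin (gamma/2)). *)

Lemma cosine_lt_of_long_opposite (R : realFieldType) (p q c k g : R) :
  0 < p -> 0 < q -> 1 <= g -> c ^+ 2 = p ^+ 2 + q ^+ 2 - 2 * k * p * q ->
  g * p < c -> g * q < c -> k < 1 - g ^+ 2 / 2.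
Proof.
wlog le_pq : p q / p <= q.
  move=> main p0 q0 g1 law gp gq.
  have [le_pq|/ltW le_qp] := leP p q; first exact: (main p q).
  by apply: (main q p) => //; rewrite law; ring.
move=> p0 q0 g1 law gp gq; rewrite ltNge; apply/negP => k_ge.
have gq2 : g ^+ 2 * q ^+ 2 < c ^+ 2 by rewrite -exprMn ltr_pXn2r ?nnegrE //; nra.
have kpq : (1 - g ^+ 2 / 2) * (p * q) <= k * (p * q) by rewrite ler_pM2r ?mulr_gt0.
(* c^2 <= (q - p)^2 + g^2 p q, too short for g q < c when g >= 1 *)
have far : g ^+ 2 * q * (q - p) < (q - p) ^+ 2 by nra.
have : q * (q - p) <= g ^+ 2 * (q * (q - p)).
  by rewrite ler_peMl ?mulr_ge0 //; nra.
nra.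
Qed.

Section EuclideanGeometry.
Variables (R : realType) (d : nat).
Implicit Types x y : 'rV[R]_d.

Lemma dotv_ge0 x : 0 <= dotv x x.
Proof. by apply: sumr_ge0 => i _; rewrite -expr2 sqr_ge0. Qed.

Lemma dotv0l y : dotv 0 y = 0.
Proof. by apply: big1 => i _; rewrite mxE mul0r. Qed.

Lemma dotv0r x : dotv x 0 = 0.
Proof. by apply: big1 => i _; rewrite mxE mulr0. Qed.

Lemma dotv_comb x y (s t : R) :
  dotv (s *: x + t *: y) (s *: x + t *: y) =
  s ^+ 2 * dotv x x + 2 * s * t * dotv x y + t ^+ 2 * dotv y y.
Proof.
rewrite /dotv !mulr_sumr -!big_split /=; apply: eq_bigr => i _.
by rewrite !mxE; ring.
Qed.

Lemma dotv_eq0 x : (dotv x x == 0) = (x == 0).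
Proof.
apply/idP/eqP => [|->]; last by rewrite dotv0l.
rewrite psumr_eq0 => [/allP x0|i _]; last by rewrite -expr2 sqr_ge0.
apply/matrixP => i j; rewrite mxE (ord1 i).
by have /= := x0 j (mem_index_enum _); rewrite mulf_eq0 orbb => /eqP.
Qed.

Lemma enorm_ge0 x : 0 <= enorm x.
Proof. exact: sqrtr_ge0. Qed.

Lemma enorm_gt0 x : (0 < enorm x) = (x != 0).
Proof. by rewrite sqrtr_gt0 lt_def dotv_ge0 dotv_eq0 andbT. Qed.

Lemma enorm_sq x : enorm x ^+ 2 = dotv x x.
Proof. by rewrite sqr_sqrtr // dotv_ge0. Qed.

Lemma enorm_distC x y : enorm (x - y) = enorm (y - x).
Proof.
by rewrite /enorm -opprB /dotv; congr Num.sqrt; apply: eq_bigr => i _; rewrite !mxE mulrNN.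
Qed.

Lemma enorm_law_of_cosines x y :
  enorm (x - y) ^+ 2 = enorm x ^+ 2 + enorm y ^+ 2 - 2 * dotv x y.
Proof.
have -> : x - y = 1 *: x + (-1) *: y by rewrite scale1r scaleN1r.
by rewrite !enorm_sq dotv_comb; ring.
Qed.

Lemma Nenorm_le_dotv x y : - (enorm x * enorm y) <= dotv x y.
Proof.
have [->|x0] := eqVneq x 0; first by rewrite dotv0l oppr_le0 mulr_ge0 ?enorm_ge0.
have [->|y0] := eqVneq y 0; first by rewrite dotv0r oppr_le0 mulr_ge0 ?enorm_ge0.
have pq_gt0 : 0 < enorm x * enorm y by rewrite mulr_gt0 ?enorm_gt0.
(* expand |q x + p y|^2 >= 0 with p = |x|, q = |y| *)
have := dotv_ge0 (enorm y *: x + enorm x *: y).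
rewrite dotv_comb -!enorm_sq; nra.
Qed.

Lemma two_asin_lt_acos (g k : R) :
  -1 <= k -> k < 1 - g ^+ 2 / 2 -> 2 * asin (g / 2) < acos k.
Proof.
move=> k_ge k_lt.
have [a_bnd sin_a] : - (pi / 2) <= asin (g / 2) <= pi / 2 /\ sin (asin (g / 2)) = g / 2.
  by apply: asin_def; apply/andP; split; nra.
have [acos_bnd cos_acos] : 0 <= acos k <= pi /\ cos (acos k) = k.
  by apply: acos_def; apply/andP; split; nra.
set a := asin (g / 2) in a_bnd sin_a *.
have [a_lt0|a_ge0] := ltP (2 * a) 0; first by apply: (lt_le_trans a_lt0); case/andP: acos_bnd.
rewrite -ltr_cos ?in_itv //= ?cos_acos; last by apply/andP; split; lra.
by rewrite mulr_natl cos_mulr2n cos2sin2 sin_a; lra.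
Qed.

Lemma angle_gt_two_asin (a1 b a2 : 'rV[R]_d) (g : R) :
  a1 != b -> a2 != b -> 1 <= g ->
  g * enorm (a1 - b) < enorm (a1 - a2) -> g * enorm (a2 - b) < enorm (a1 - a2) ->
  2 * asin (g / 2) < angle a1 b a2.
Proof.
rewrite /angle => a1b a2b g1.
have -> : a1 - a2 = (a1 - b) - (a2 - b) by rewrite opprB addrA subrK.
have p0 : 0 < enorm (a1 - b) by rewrite enorm_gt0 subr_eq0.
have q0 : 0 < enorm (a2 - b) by rewrite enorm_gt0 subr_eq0.
set u := a1 - b in p0 *; set v := a2 - b in q0 * => gp gq.
have pq0 : 0 < enorm u * enorm v by rewrite mulr_gt0.
apply: two_asin_lt_acos.
  by rewrite ler_pdivlMr // mulN1r Nenorm_le_dotv.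
apply: (cosine_lt_of_long_opposite p0 q0 g1 _ gp gq).
by rewrite enorm_law_of_cosines; field; rewrite !gt_eqF.
Qed.

End EuclideanGeometry.

Section TreeExchange.
Variable T : finType.
Implicit Types (U S : {set T}) (E : {set T * T}).

Definition symmetric_edges E := forall x y, (x, y) \in E -> (y, x) \in E.

Definition add_edge E u v := (u, v) |: ((v, u) |: E).
Definition del_edge E u v := E :\ (u, v) :\ (v, u).

Lemma in_add_edge E u v p :
  (p \in add_edge E u v) = [|| p == (u, v), p == (v, u) | p \in E].
Proof. by rewrite !in_setU1. Qed.

Lemma in_del_edge E u v p :
  (p \in del_edge E u v) = [&& p != (u, v), p != (v, u) & p \in E].
Proof. by rewrite !in_setD1 andbCA. Qed.

Lemma add_edge_sym E u v : symmetric_edges E -> symmetric_edges (add_edge E u v).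
Proof.
move=> E_sym x y; rewrite !in_add_edge !xpair_eqE.
by case/or3P => [/andP[/eqP-> /eqP->]|/andP[/eqP-> /eqP->]|/E_sym->]; rewrite ?eqxx ?orbT.
Qed.

Lemma del_edge_sym E u v : symmetric_edges E -> symmetric_edges (del_edge E u v).
Proof.
move=> E_sym x y; rewrite !in_del_edge !xpair_eqE => /and3P[xy_uv xy_vu /E_sym ->].
by rewrite [(y == u) && _]andbC [(y == v) && _]andbC xy_uv xy_vu.
Qed.

Lemma card_add_edge_le E u v : (#|add_edge E u v| <= #|E| + 2)%N.
Proof.
by rewrite !cardsU1 addnA addnC leq_add2l; exact: leq_add (leq_b1 _) (leq_b1 _).
Qed.

Lemma card_del_edge E u v : (u, v) \in E -> (v, u) \in E -> u != v ->
  #|E| = (#|del_edge E u v| + 2)%N.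
Proof.
move=> uv vu u_v; rewrite (cardsD1 (u, v)) uv (cardsD1 (v, u) (E :\ _)).
by rewrite in_setD1 vu xpair_eqE eq_sym (negbTE u_v) addnA addnC.
Qed.

Lemma add_del_edgeK E u v : (u, v) \in E -> (v, u) \in E -> u != v ->
  add_edge (del_edge E u v) u v = E.
Proof.
move=> uv vu u_v; rewrite /add_edge /del_edge finset.setD1K ?finset.setD1K //.
by rewrite in_setD1 vu xpair_eqE eq_sym (negbTE u_v).
Qed.

Lemma connect_crossing_edge E S r z : r \in S -> z \notin S ->
  connect (fun a b => (a, b) \in E) r z ->
  exists x y, [/\ x \in S, y \notin S & (x, y) \in E].
Proof.
move=> rS zS /connectP [p r_p z_last]; subst z.
elim: p r rS r_p zS => [|y p IHp] r rS /=.
  by rewrite rS.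
case/andP=> ry y_p; have [yS|yS] := boolP (y \in S); first exact: IHp.
by exists r, y.
Qed.

Lemma card_edges_connected U E :
  (forall x y, (x, y) \in E -> [&& x \in U, y \in U & x != y]) -> symmetric_edges E ->
  U != finset.set0 -> {in U &, forall x y, connect (fun a b => (a, b) \in E) x y} ->
  ((#|U| - 1).*2 <= #|E|)%N.
Proof.
move=> E_in E_sym /finset.set0Pn [r rU] E_conn.
pose inner S := [set p in E | (p.1 \in S) && (p.2 \in S)].
(* grow a set S around r one vertex at a time; each new vertex brings two inner edges *)
suff grow k : (k < #|U|)%N -> exists S, [/\ S \subset U, r \in S, #|S| = k.+1
    & (k.*2 <= #|inner S|)%N].
  have U_gt0 : (0 < #|U|)%N by apply/card_gt0P; exists r.
  have [|S [_ _ _ /leq_trans-> //]] := grow (#|U| - 1)%N; first lia.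
  by apply: subset_leq_card; apply/fintype.subsetP => p; rewrite inE => /andP[].
elim: k => [|k IHk] k_lt.
  by exists [set r]; rewrite finset.sub1set finset.set11 finset.cards1.
have [S [SU rS S_card S_inner]] := IHk (ltnW k_lt).
have /fintype.subsetPn [z zU zS] : ~~ (U \subset S).
  by apply/negP => /subset_leq_card; rewrite S_card; lia.
have [x [y [xS yS xy]]] := connect_crossing_edge rS zS (E_conn r z rU zU).
have /and3P [_ yU x_y] := E_in _ _ xy.
exists (y |: S); split.
- by rewrite finset.subUset finset.sub1set yU.
- by rewrite in_setU1 rS orbT.
- by rewrite cardsU1 yS S_card.
have sub : add_edge (inner S) x y \subset inner (y |: S).
  apply/fintype.subsetP => p; rewrite in_add_edge !inE => /or3P[/eqP->|/eqP->|].
  + by rewrite xy eqxx xS !orbT.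
  + by rewrite E_sym // eqxx xS !orbT.
  + by case/and3P => -> -> ->; rewrite !orbT.
apply: leq_trans (subset_leq_card sub); rewrite /add_edge !cardsU1 !in_setU1 !inE.
by rewrite /= (negbTE yS) !andbF xpair_eqE (negbTE x_y) /= doubleS !add1n !ltnS.
Qed.

Lemma tree_exchange U E a1 a2 b :
  is_tree U E -> (a1, b) \in E -> (a2, b) \in E -> a1 != a2 ->
  is_tree U (add_edge (del_edge E a2 b) a1 a2) /\ (a1, a2) \notin E.
Proof.
case=> U0 E_in E_sym E_conn E_card a1b a2b a1_a2.
have /and3P [a1U _ a1_b] := E_in _ _ a1b.
have /and3P [a2U _ a2_b] := E_in _ _ a2b.
set D := del_edge E a2 b; set E' := add_edge D a1 a2.
have a1bD : (a1, b) \in D by rewrite in_del_edge !xpair_eqE (negbTE a1_a2) (negbTE a1_b).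
have ba1D : (b, a1) \in D.
  by rewrite in_del_edge !xpair_eqE eq_sym (negbTE a2_b) eq_sym (negbTE a1_a2) E_sym ?andbF.
have E'_in x y : (x, y) \in E' -> [&& x \in U, y \in U & x != y].
  rewrite in_add_edge in_del_edge !xpair_eqE.
  case/or3P => [/andP[/eqP-> /eqP->]|/andP[/eqP-> /eqP->]|/and3P[_ _ /E_in//]].
    by rewrite a1U a2U.
  by rewrite a1U a2U eq_sym.
have E'_sym : symmetric_edges E' by apply/add_edge_sym/del_edge_sym.
have E'_conn : {in U &, forall x y, connect (fun a b => (a, b) \in E') x y}.
  move=> x y xU yU; apply: connect_sub (E_conn x y xU yU) => u v uv.
  have a1a2 : (a1, a2) \in E' by rewrite in_add_edge eqxx.
  have a2a1 : (a2, a1) \in E' by rewrite in_add_edge eqxx orbT.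
  have a1b' : (a1, b) \in E' by rewrite in_add_edge a1bD !orbT.
  have ba1' : (b, a1) \in E' by rewrite in_add_edge ba1D !orbT.
  have [[-> ->]|uv_a2b] := eqVneq (u, v) (a2, b).
    exact: connect_trans (connect1 a2a1) (connect1 a1b').
  have [[-> ->]|uv_ba2] := eqVneq (u, v) (b, a2).
    exact: connect_trans (connect1 ba1') (connect1 a1a2).
  by apply: connect1; rewrite in_add_edge in_del_edge uv_a2b uv_ba2 uv !orbT.
have card_D : #|E| = (#|D| + 2)%N := card_del_edge a2b (E_sym _ _ a2b) a2_b.
have lb := card_edges_connected E'_in E'_sym U0 E'_conn.
have ub : (#|E'| <= #|D| + 2)%N := card_add_edge_le D a1 a2.
(* a triangle a1 a2 b would make the exchange lose two edges *)
have a1a2_E : (a1, a2) \notin E.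
  apply/negP => a1a2; have a2a1 := E_sym _ _ a1a2.
  have a1a2D : (a1, a2) \in D.
    by rewrite in_del_edge a1a2 !xpair_eqE (negbTE a1_a2) (negbTE a1_b).
  have a2a1D : (a2, a1) \in D.
    by rewrite in_del_edge a2a1 !xpair_eqE (negbTE a1_b) (negbTE a2_b) andbF.
  have E'_D : #|E'| = #|D| by rewrite !cardsU1 in_setU1 a1a2D a2a1D orbT.
  by move: lb; rewrite E'_D -E_card card_D addn2 ltnNge leqnSn.
split=> //; split=> //.
by apply/eqP; rewrite eqn_leq lb andbT -E_card card_D.
Qed.

End TreeExchange.

Section TreeWeight.
Variables (R : realType) (T : finType).
Implicit Types (w : T -> T -> R) (E : {set T * T}).

Lemma tree_weight_add_edge w E u v : (forall x y, w x y = w y x) ->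
  (u, v) \notin E -> (v, u) \notin E -> u != v ->
  tree_weight w (add_edge E u v) = tree_weight w E + w u v.
Proof.
move=> wC uv vu u_v; have vu' : (u, v) \notin (v, u) |: E.
  by rewrite in_setU1 negb_or uv xpair_eqE (negbTE u_v).
by rewrite /tree_weight big_setU1 //= big_setU1 //= [w v u]wC; field.
Qed.

Lemma tree_weight_del_edge w E u v : (forall x y, w x y = w y x) ->
  (u, v) \in E -> (v, u) \in E -> u != v ->
  tree_weight w (del_edge E u v) = tree_weight w E - w u v.
Proof.
move=> wC uv vu u_v; rewrite -{2}(add_del_edgeK uv vu u_v) tree_weight_add_edge ?addrK //.
  by rewrite in_del_edge eqxx.
by rewrite in_del_edge eqxx andbF.
Qed.

Definition stretch_on E (gamma : R) w u v := if (u, v) \in E then gamma * w u v else w u v.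

Lemma stretch_onC E gamma w : symmetric_edges E -> (forall x y, w x y = w y x) ->
  forall x y, stretch_on E gamma w x y = stretch_on E gamma w y x.
Proof.
move=> E_sym wC x y; rewrite /stretch_on wC.
have [/E_sym->|yx] := boolP ((x, y) \in E); first by [].
by case: ifP => // /E_sym; rewrite (negbTE yx).
Qed.

Lemma stretch_on_bounds E gamma w x y : 1 <= gamma -> 0 <= w x y ->
  w x y <= stretch_on E gamma w x y <= gamma * w x y.
Proof.
move=> gamma_ge1 w_ge0; have le_w : w x y <= gamma * w x y by rewrite ler_peMl.
by rewrite /stretch_on; case: ifP; rewrite lexx le_w.
Qed.

Lemma min_steiner_exists (Term U : {set T}) E w :
  steiner_tree Term U E -> exists U' E', min_steiner Term w U' E'.
Proof.
move=> UE; pose P (X : {set T} * {set T * T}) := `[< steiner_tree Term X.1 X.2 >].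
have [[U' E'] /asboolP UE' UE'_min] :=
  arg_minP (fun X => tree_weight w X.2) (asboolT UE : P (U, E)).
exists U', E'; split=> // U2 E2 UE2.
exact: (UE'_min (U2, E2)) (asboolT UE2).
Qed.

End TreeWeight.

Section Stability.
Variables (R : realType) (d : nat) (T : finType) (pos : T -> 'rV[R]_d).
Variables (Term U : {set T}) (E : {set T * T}) (gamma : R).
Hypothesis OPT : stable_with pos Term gamma U E.

Lemma stable_with_lighter_eq (w' : T -> T -> R) U' E' :
  (forall u v, w' u v = w' v u) ->
  (forall u v, eweight pos u v <= w' u v <= gamma * eweight pos u v) ->
  steiner_tree Term U' E' -> tree_weight w' E' <= tree_weight w' E -> E' = E.
Proof.
case: OPT => [[UE _] uniq] w'C w'_bnd UE' lighter.
have [Um [Em UEm]] := min_steiner_exists w' UE.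
have [eU eE] := uniq w' w'C w'_bnd _ _ UEm; subst Um Em.
suff UE'_min : min_steiner Term w' U' E' by case: (uniq w' w'C w'_bnd _ _ UE'_min).
split=> // U2 E2 UE2.
exact: le_trans lighter (UEm.2 _ _ UE2).
Qed.

Lemma stable_with_edge_lt a1 a2 b : 1 <= gamma ->
  a1 != a2 -> (a1, b) \in E -> (a2, b) \in E ->
  gamma * eweight pos a2 b < eweight pos a1 a2.
Proof.
move=> gamma_ge1 a1_a2 a1b a2b.
case: (OPT) => [[[E_tree TU] _] _]; have [_ E_in E_sym _ _] := E_tree.
have /and3P [_ _ a2_b] := E_in _ _ a2b.
have [tree' a1a2_E] := tree_exchange E_tree a1b a2b a1_a2.
set E' := add_edge _ a1 a2 in tree'.
have wC : forall x y, eweight pos x y = eweight pos y x by move=> x y; apply: enorm_distC.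
pose w' := stretch_on E gamma (eweight pos).
have w'C := stretch_onC gamma E_sym wC.
have w'_bnd x y : eweight pos x y <= w' x y <= gamma * eweight pos x y.
  exact: stretch_on_bounds gamma_ge1 (enorm_ge0 _).
have E'_weight : tree_weight w' E' =
    tree_weight w' E - gamma * eweight pos a2 b + eweight pos a1 a2.
  have a2a1_E : (a2, a1) \notin E by apply: contra a1a2_E => /E_sym.
  rewrite tree_weight_add_edge ?tree_weight_del_edge ?in_del_edge //;
    rewrite ?(negbTE a1a2_E) ?(negbTE a2a1_E) ?andbF //.
    by rewrite /w' /stretch_on a2b (negbTE a1a2_E).
  exact: E_sym.
rewrite ltNge; apply/negP => short.
have E'E : E' = E.
  apply: stable_with_lighter_eq w'C w'_bnd (conj tree' TU) _.
  by rewrite E'_weight; lra.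
by move: a1a2_E; rewrite -E'E in_add_edge eqxx.
Qed.

End Stability.

Theorem mainTheorem10 (R : realType) (d : nat) (T : finType)
    (pos : T -> 'rV[R]_d) (pos_inj : injective pos) (Term : {set T})
    (gamma : R) (hgamma : 1 < gamma)
    (U : {set T}) (E : {set T * T}) (hOPT : stable_with pos Term gamma U E)
    (a1 a2 b : T) (ha1 : a1 \in Term) (ha2 : a2 \in Term) (ha12 : a1 != a2)
    (hb : b \notin Term) (he1 : (a1, b) \in E) (he2 : (a2, b) \in E) :
  2 * asin (gamma / 2) < angle (pos a1) (pos b) (pos a2).
Proof.
have gamma_ge1 : 1 <= gamma := ltW hgamma.
have a1_b : a1 != b by apply: contraNneq hb => <-.
have a2_b : a2 != b by apply: contraNneq hb => <-.
have a2_a1 : a2 != a1 by rewrite eq_sym.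
apply: angle_gt_two_asin; rewrite ?(inj_eq pos_inj) //.
  rewrite [enorm (pos a1 - pos a2)]enorm_distC.
  exact: (stable_with_edge_lt hOPT gamma_ge1 a2_a1 he2 he1).
exact: (stable_with_edge_lt hOPT gamma_ge1 ha12 he1 he2).
Qed.
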